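(* Let $S$ be a left Ore set of a ring $R$. Then $S_c=\max(S)$, where $S_c:=\{s\in S:\ker(s\cdot)=\mathrm{ass}(S)\}$ is the core of $S$ and $\max(S):=\{s\in S:\ker(s\cdot)\text{ is a maximal element of the poset }(\{\ker(t\cdot):t\in S\},\subseteq)\}$.
   Context: All rings are associative with $1$. A multiplicative subset $S$ of $R$ ($1\in S$, $0\notin S$, closed under multiplication) is a left Ore set if $Sr\cap Rs\neq\emptyset$ for all $r\in R$, $s\in S$; for it, $\mathrm{ass}(S):=\{r\in R: sr=0\text{ for some } s\in S\}$. For $s\in R$, $\ker(s\cdot):=\{r\in R: sr=0\}$ is the kernel of left multiplication by $s$. *)

From HB Require Import structures.
From mathcomp Require Import all_boot all_algebra.
Set Implicit Arguments. Unset Strict Implicit. Unset Printing Implicit Defensive.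
Import GRing.Theory.
Local Open Scope ring_scope.

(* Subsets of R are predicates R -> Prop (R need not be finite). *)
Section OreDefs.
Variable R : nzRingType.

Definition mult_subset (S : R -> Prop) : Prop :=
  [/\ S 1, ~ S 0 & forall a b, S a -> S b -> S (a * b)].

Definition left_Ore (S : R -> Prop) : Prop :=
  mult_subset S /\
  forall (r s : R), S s -> exists s' r', S s' /\ s' * r = r' * s.

Definition ass (S : R -> Prop) (r : R) : Prop := exists s, S s /\ s * r = 0.

Definition kerl (s : R) (r : R) : Prop := s * r = 0.

Definition core (S : R -> Prop) (s : R) : Prop :=
  S s /\ forall r, kerl s r <-> ass S r.

Definition maxS (S : R -> Prop) (s : R) : Prop :=
  S s /\ forall t, S t ->
    (forall r, kerl s r -> kerl t r) -> (forall r, kerl t r -> kerl s r).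

End OreDefs.

From mathcomp Require Import all_boot all_algebra.
Import GRing.Theory.
Local Open Scope ring_scope.

(* Every kernel ker(t.) with t in S lies in ass(S), so a kernel equal to ass(S)
   is maximal.  Conversely, the Ore condition makes ass(S) a left ideal: if
   t r = 0 and s' s = r' t, then s' s r = 0.  Hence every r in ass(S) is killed
   by some s' s, whose kernel contains ker(s.); maximality of ker(s.) then
   forces s r = 0. *)

Section OreCore.

Variables (R : nzRingType) (S : R -> Prop).

Lemma kerl_mull (t s r : R) : kerl s r -> kerl (t * s) r.
Proof. by rewrite /kerl -mulrA => ->; rewrite mulr0. Qed.

Lemma kerl_sub_ass (s r : R) : S s -> kerl s r -> ass S r.
Proof. by move=> Ss ksr; exists s. Qed.

Lemma left_Ore_ass_mull (a r : R) : left_Ore S -> ass S r -> ass S (a * r).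
Proof.
move=> [_ Ore] [t [St tr0]].
have [s' [r' [Ss' Es']]] := Ore a t St.
by exists s'; split; rewrite // mulrA Es' -mulrA tr0 mulr0.
Qed.

Lemma core_maxS (s : R) : core S s -> maxS S s.
Proof.
move=> [Ss kerE]; split=> // t St _ r ktr.
by apply/kerE; exact: kerl_sub_ass St ktr.
Qed.

Lemma maxS_core (s : R) : left_Ore S -> maxS S s -> core S s.
Proof.
move=> SOre [Ss smax]; split=> // r; split; first exact: kerl_sub_ass Ss.
move=> /(left_Ore_ass_mull s _ SOre) [s' [Ss' s'sr0]].
have [[_ _ SM] _] := SOre.
apply: (smax (s' * s)); first exact: SM.
  exact: kerl_mull.
by rewrite /kerl -mulrA.
Qed.

End OreCore.

Theorem proposition4p4 (R : nzRingType) (S : R -> Prop) :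
  left_Ore S -> forall s : R, core S s <-> maxS S s.
Proof.
by move=> SOre s; split; [exact: core_maxS | exact: maxS_core].
Qed.
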